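(* For a real number $u \geqslant 0$ and an integer $h \geqslant 2$, let $R_2(h,u)$ denote the number of pairs of integers $(m,n) \in (u,u+h]^2$ such that $mn$ is a perfect square. Then \[ R_2(h,u) \ll h \log h, \] where the implied constant is absolute.
   Context: The notation $X \ll Y$ means $|X| \leqslant cY$ for some absolute constant $c>0$. *)

From mathcomp Require Import all_boot all_order all_algebra.
From mathcomp Require Import all_classical all_reals all_analysis.
Set Implicit Arguments. Unset Strict Implicit. Unset Printing Implicit Defensive.
Import Order.TTheory GRing.Theory Num.Theory.
Local Open Scope ring_scope.

Definition is_square (k : nat) : bool :=
  [exists j : 'I_k.+1, ((j : nat) * j == k)%N].

(* R_2(h,u): number of pairs of integers (m,n) in (u, u+h]^2 with m*n a
   perfect square.  Since u >= 0 such integers are positive naturals, and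
   every one of them is <= Num.trunc (u + h), so the range 0 .. trunc(u+h)
   contains all of them. *)
Definition R2 (R : realType) (h : nat) (u : R) : nat :=
  let M := (Num.trunc (u + h%:R)).+1 in
  #|[set p : 'I_M * 'I_M |
      [&& u < (p.1 : nat)%:R, (p.1 : nat)%:R <= u + h%:R,
          u < (p.2 : nat)%:R, (p.2 : nat)%:R <= u + h%:R &
          is_square ((p.1 : nat) * (p.2 : nat))%N]]|.

From mathcomp Require Import all_boot all_order all_algebra.
From mathcomp Require Import all_classical all_reals all_analysis.
From mathcomp Require Import unstable zify ring lra.
Import Order.TTheory GRing.Theory Num.Theory.
Set Implicit Arguments. Unset Strict Implicit. Unset Printing Implicit Defensive.
Local Open Scope ring_scope.

(* If mn is a square then m = kq^2 and n = kp^2 for a common k.  For fixed k,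
   the N integers q with kq^2 in the window (u, u + h] span an interval of
   length d with kd^2 < h, so k(N - 1)^2 < h and there are at most
   N(N - 1) <= 2h/k pairs q <> p; there are none once k >= h.  Summing over
   k < h gives at most 2h H_(h-1) = O(h log h) off-diagonal pairs, and the
   diagonal m = n contributes at most h more. *)

Lemma card_le_diam M (A : {set 'I_M}) (i j : nat) :
  (forall x : 'I_M, x \in A -> (i <= x <= j)%N) -> (#|A| <= (j - i).+1)%N.
Proof.
move=> Aij; rewrite -[(j - i).+1]card_ord.
apply: (@leq_card_in _ _ (fun x : 'I_M => inord (x - i) : 'I_(j - i).+1)).
move=> x y /Aij xij /Aij yij /(congr1 val) /=.
by rewrite !inordK; try lia; move=> exy; apply: ord_inj; lia.
Qed.

Definition offdiag (T : finType) (A : {set T}) : {set T * T} :=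
  [set x in finset.setX A A | x.1 != x.2].

Lemma card_offdiag (T : finType) (A : {set T}) :
  #|offdiag A| = (#|A| * #|A|.-1)%N.
Proof.
have diagE : finset.setX A A :&: [set x | x.1 == x.2] = [set (a, a) | a in A].
  apply/setP => -[a b]; rewrite !inE /=.
  apply/andP/imsetP => [[/andP[aA _] /eqP <-]|[c cA [-> ->]]]; last by rewrite cA.
  by exists a.
have offdiagE : offdiag A = finset.setX A A :\: [set x | x.1 == x.2].
  by apply/setP => x; rewrite !inE andbC.
have := cardsID [set x : T * T | x.1 == x.2] (finset.setX A A).
rewrite diagE card_imset; last by move=> a b [].
rewrite cardsX -offdiagE => /(canRL (addKn _)) ->.
by rewrite -subn1 mulnBr muln1.
Qed.

Section NatFacts.
Local Open Scope nat_scope.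

(* With g = gcd(m, s), m = gq and s = gp for coprime q, p; then q n = g p^2
   forces q | g. *)
Lemma prod_sqr_decomp (m n s : nat) : 0 < m -> m * n = s ^ 2 ->
  exists k q p, m = k * q ^ 2 /\ n = k * p ^ 2.
Proof.
move=> m_gt0 mnE.
set g := gcdn m s.
have g_gt0 : 0 < g by rewrite gcdn_gt0 m_gt0.
have mE : m = (m %/ g) * g by rewrite divnK // dvdn_gcdl.
have sE : s = (s %/ g) * g by rewrite divnK // dvdn_gcdr.
set q := m %/ g in mE *; set p := s %/ g in sE *.
have q_gt0 : 0 < q by move: m_gt0; rewrite mE muln_gt0 => /andP[].
have coqp : coprime q p.
  have : gcdn q p * g = 1 * g by rewrite muln_gcdl -mE -sE mul1n.
  by move/eqP; rewrite eqn_pmul2r.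
have qnE : q * n = g * p ^ 2.
  by apply/eqP; rewrite -(eqn_pmul2r g_gt0) mulnAC -mE mnE sE; apply/eqP; ring.
have /dvdnP[k gE] : q %| g.
  by rewrite -(@Gauss_dvdl _ _ (p ^ 2)) ?coprimeXr // -qnE dvdn_mulr.
exists k, q, p; split; first by rewrite mE gE; ring.
by apply/eqP; rewrite -(eqn_pmul2l q_gt0) qnE gE; apply/eqP; ring.
Qed.

Lemma sqr_factors_le (k q : nat) : 0 < k * q ^ 2 -> k <= k * q ^ 2 /\ q <= k * q ^ 2.
Proof. by rewrite muln_gt0 expn_gt0 /= => /andP[k_gt0 q_gt0]; split; nia. Qed.

Lemma sqr_gap_lt (k i j d : nat) :
  i <= j -> k * j ^ 2 < k * i ^ 2 + d -> k * (j - i) ^ 2 < d.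
Proof. by move=> /subnK <-; rewrite addnK; nia. Qed.

Lemma leq_sum_supp (g : nat -> nat) (M N : nat) :
  (forall k, N <= k -> g k = 0) -> \sum_(k < M) g k <= \sum_(k < N) g k.
Proof.
move=> g_supp; rewrite -!(big_mkord xpredT).
have [MN|NM] := leqP M N.
  by rewrite [X in _ <= X](big_cat_nat (leq0n M) MN) leq_addr.
rewrite (big_cat_nat (leq0n N) (ltnW NM)) -[X in _ <= X]addn0 leq_add2l leqn0.
rewrite big1_seq // => k /andP[_]; rewrite mem_index_iota => /andP[Nk _].
exact: g_supp.
Qed.

End NatFacts.

Section Harmonic.
Variable R : realType.

Lemma ln_succ_ge (x : R) : 0 < x -> (x + 1)^-1 <= ln (x + 1) - ln x.
Proof.
move=> x_gt0; have x1_gt0 : 0 < x + 1 by lra.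
have := @le_ln1Dx R (- (x + 1)^-1).
have -> : 1 - (x + 1)^-1 = x / (x + 1) by field; rewrite gt_eqF.
rewrite ln_div ?posrE // ltrNl opprK invf_lt1 //; lra.
Qed.

Lemma harmonic_series_le n : series (@harmonic R) n.+1 <= 1 + ln n.+1%:R.
Proof.
elim: n => [|n IHn]; first by rewrite /series /= big_nat1 /= invr1 ln1 addr0.
have step := ln_succ_ge (ltr0Sn R n); rewrite natr1 in step.
by rewrite seriesSr; apply: le_trans (lerD IHn step) _; lra.
Qed.

Lemma sum_le_harmonic (g : nat -> nat) (C n M : nat) :
  g 0 = 0%N -> (forall k, (n < k)%N -> g k = 0%N) -> (forall k, k * g k <= C)%N ->
  ((\sum_(k < M) g k)%:R : R) <= C%:R * series harmonic n.
Proof.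
move=> g0 g_supp gC.
apply: (@le_trans _ _ (\sum_(k < n.+1) g k)%:R); first by rewrite ler_nat leq_sum_supp.
rewrite big_ord_recl g0 add0n natr_sum seriesEord /= mulr_sumr.
apply: ler_sum => i _; rewrite /bump /= add1n ler_pdivlMr ?ltr0n // -natrM ler_nat.
by rewrite mulnC.
Qed.

End Harmonic.

Section Window.
Variables (R : realType) (u : R) (h : nat).
Hypotheses (u_ge0 : 0 <= u) (h_gt0 : (0 < h)%N).

Definition in_window (x : nat) : bool := (u < x%:R) && (x%:R <= u + h%:R).

Lemma in_window_gt0 x : in_window x -> (0 < x)%N.
Proof. by case/andP => ux _; rewrite -(ltr0n R) (le_lt_trans u_ge0). Qed.

Lemma in_window_ltn x y : in_window x -> in_window y -> (y < x + h)%N.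
Proof.
case/andP=> ux _ /andP[_ yu]; rewrite -(ltr_nat R) natrD.
by apply: le_lt_trans yu _; rewrite ltrD2r.
Qed.

Local Notation M := (Num.truncn (u + h%:R)).+1.

Lemma card_window : (#|[set x : 'I_M | in_window x]| <= h)%N.
Proof.
have [->|[a aW]] := set_0Vmem [set x : 'I_M | in_window x]; first by rewrite cards0.
rewrite inE in aW.
have [i iW i_min] := @arg_minnP _ a (fun x : 'I_M => in_window x) (@nat_of_ord _) aW.
apply: leq_trans (@card_le_diam _ _ i (i + h.-1) _) _; last by lia.
move=> x; rewrite inE => xW; rewrite i_min //=.
by have := in_window_ltn iW xW; lia.
Qed.

Definition window_roots (k : nat) : {set 'I_M} :=
  [set q : 'I_M | in_window (k * q ^ 2)].

Lemma card_window_roots0 : #|window_roots 0| = 0%N.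
Proof. by apply: eq_card0 => q; rewrite !inE mul0n; apply/negP => /in_window_gt0. Qed.

Lemma card_window_roots k : (k * #|window_roots k|.-1 ^ 2 < h)%N.
Proof.
have [->|[a aA]] := set_0Vmem (window_roots k); first by rewrite cards0 muln0.
rewrite inE in aA.
have [i iA i_min] := @arg_minnP _ a (fun x : 'I_M => in_window (k * x ^ 2)) (@nat_of_ord _) aA.
have [j jA j_max] := @arg_maxnP _ a (fun x : 'I_M => in_window (k * x ^ 2)) (@nat_of_ord _) aA.
have card_le : (#|window_roots k| <= (j - i).+1)%N.
  by apply: card_le_diam => x; rewrite inE => xA; rewrite i_min //; apply: j_max.
have gap : (k * (j - i) ^ 2 < h)%N.
  by apply: sqr_gap_lt (i_min _ jA) _; exact: in_window_ltn.
apply: leq_ltn_trans gap; rewrite leq_mul2l leq_sqr; apply/orP; right; lia.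
Qed.

Lemma card_offdiag_window_roots k : (k * #|offdiag (window_roots k)| <= 2 * h)%N.
Proof.
rewrite card_offdiag; have := card_window_roots k.
by case: #|window_roots k| => [|N] /=; nia.
Qed.

Lemma offdiag_window_roots_eq0 k : (h <= k)%N -> #|offdiag (window_roots k)| = 0%N.
Proof.
rewrite card_offdiag; have := card_window_roots k.
by case: #|window_roots k| => [|N] /=; nia.
Qed.

Definition scale_sqr (k : nat) (x : 'I_M * 'I_M) : 'I_M * 'I_M :=
  (inord (k * x.1 ^ 2), inord (k * x.2 ^ 2)).

Lemma square_pair_scale_sqr (m n : 'I_M) :
  in_window m -> in_window n -> is_square (m * n) -> m != n ->
  exists k : 'I_M, exists2 x, x \in offdiag (window_roots k) & (m, n) = scale_sqr k x.
Proof.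
move=> wm wn /existsP[s /eqP sE] mn.
have [k [q [p [mE nE]]]] :=
  prod_sqr_decomp (in_window_gt0 wm) (etrans (esym sE) (mulnn s)).
have [k_le q_le] : (k <= m /\ q <= m)%N.
  by rewrite mE; apply: sqr_factors_le; rewrite -mE (in_window_gt0 wm).
have [_ p_le] : (k <= n /\ p <= n)%N.
  by rewrite nE; apply: sqr_factors_le; rewrite -nE (in_window_gt0 wn).
have k_lt := leq_ltn_trans k_le (ltn_ord m).
have q_lt := leq_ltn_trans q_le (ltn_ord m).
have p_lt := leq_ltn_trans p_le (ltn_ord n).
exists (Ordinal k_lt), (Ordinal q_lt, Ordinal p_lt).
  rewrite !inE /= -mE -nE wm wn /=.
  by apply: contra_neq mn => -[qp]; apply: val_inj; rewrite /= mE nE qp.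
by congr pair; apply: val_inj; rewrite /= inordK -?mE -?nE.
Qed.

Lemma R2_le_sum : (R2 h u <= h + \sum_(k < M) #|offdiag (window_roots k)|)%N.
Proof.
set W := [set x : 'I_M | in_window x].
set U := \bigcup_(k < M) scale_sqr k @: offdiag (window_roots k).
rewrite /R2 /=; apply: (@leq_trans #|[set (x, x) | x in W] :|: U|).
  apply/subset_leq_card/fintype.subsetP => -[m n].
  rewrite !inE /= => /and5P[m1 m2 n1 n2 sq].
  have wm : in_window m by apply/andP.
  have wn : in_window n by apply/andP.
  have [<-|mn] := eqVneq m n; first by rewrite imset_f ?inE.
  have [k [x xP ->]] := square_pair_scale_sqr wm wn sq mn.
  by apply/orP; right; apply/finset.bigcupP; exists k => //; rewrite imset_f.
apply: leq_trans (leq_card_setU _ _) _; apply: leq_add.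
  exact: leq_trans (leq_imset_card _ _) card_window.
apply: leq_trans (card_big_setU _ _ _) _; apply: leq_sum => k _.
exact: leq_imset_card.
Qed.

End Window.

Theorem lemma2p1 (R : realType) :
  exists c : R, 0 < c /\
    forall (u : R) (h : nat), 0 <= u -> (2 <= h)%N ->
      ((R2 h u)%:R : R) <= c * h%:R * ln (h%:R : R).
Proof.
exists 8; split => // u h u_ge0 h_ge2.
have h_gt0 : (0 < h)%N by apply: leq_trans h_ge2.
have R2_le := R2_le_sum u_ge0 h_gt0; rewrite -(ler_nat R) natrD in R2_le.
have sum_le : ((\sum_(k < (Num.truncn (u + h%:R)).+1)
                 #|offdiag (window_roots u h k)|)%:R : R)
              <= (2 * h)%:R * series harmonic h.
  apply: (@sum_le_harmonic R (fun k => #|offdiag (window_roots u h k)|)) => [|k hk|k].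
  - by rewrite card_offdiag card_window_roots0.
  - exact/offdiag_window_roots_eq0/ltnW.
  - exact: card_offdiag_window_roots.
have H_le : series (@harmonic R) h <= 1 + ln h%:R.
  by have := harmonic_series_le R h.-1; rewrite prednK.
have ln_ge : 2^-1 <= ln (h%:R : R).
  have := ln_succ_ge (@ltr01 R); rewrite ln1 subr0 => /le_trans; apply.
  by rewrite ler_ln ?posrE ?ltr0n // (ler_nat R 2).
rewrite natrM in sum_le.
have hH := ler_wpM2l (ler0n R h) H_le.
have hL : 0 <= h%:R * (2 * ln (h%:R : R) - 1) by rewrite mulr_ge0 //; lra.
lra.
Qed.
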